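(* Let $f,g_1,\dots,g_m\in\mathrm{CN}^n$ have a common convex domain $M\subseteq\mathbb{R}^n$, let $D\subseteq M$, let $t(x)=\max_{1\le i\le m} g_i(x)$, $(s)_+=\max\{s,0\}$, and $h(x)=((t(x))_+,f(x))\in\mathbb{R}^2$. Then $h$ is conic with respect to the lexicographic order on $\mathbb{R}^2$, and if the feasible set $S=\{x\in D: g_i(x)\le 0 \text{ for all } i\}$ is nonempty, then the set of minimizers of $f$ over $S$ coincides with the set of lexicographic minimizers of $h$ over $D$.
   Context: A function $f:\mathrm{dom}(f)\to \Omega$, with $\mathrm{dom}(f)\subseteq\mathbb{R}^n$ convex and $\Omega$ totally ordered ($\mathbb{R}$, or $\mathbb{R}^2$ with lexicographic order), is conic if for all $y,z\in\mathrm{dom}(f)$ and $t\ge 0$ with $f(y)\le f(z)$ and $z+t(z-y)\in\mathrm{dom}(f)$, one has $f(z+t(z-y))\ge f(z)$. $\mathrm{CN}^n$ is the class of real-valued conic functions on convex subsets of $\mathbb{R}^n$. *)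

(* R^n is rendered as 'rV[R]_n over an arbitrary real field R
   (the statement is purely order-algebraic, so this generalizes R = reals). *)
From HB Require Import structures.
From mathcomp Require Import all_boot all_order all_algebra.
Set Implicit Arguments. Unset Strict Implicit. Unset Printing Implicit Defensive.
Import Order.TTheory GRing.Theory Num.Theory.
Local Open Scope ring_scope.

Section Defs.
Variable R : realFieldType.
Variable n : nat.
Notation vec := 'rV[R]_n.

Definition convex (M : vec -> Prop) : Prop :=
  forall x y (l : R), M x -> M y -> 0 <= l -> l <= 1 ->
    M ((1 - l) *: x + l *: y).

Definition conic {T : Type} (le : T -> T -> Prop) (M : vec -> Prop)
    (f : vec -> T) : Prop :=
  forall y z (t : R), M y -> M z -> 0 <= t -> le (f y) (f z) ->
    M (z + t *: (z - y)) -> le (f z) (f (z + t *: (z - y))).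

Definition lex_le (a b : R * R) : Prop :=
  a.1 < b.1 \/ (a.1 = b.1 /\ a.2 <= b.2).

Definition rle (a b : R) : Prop := a <= b.

Definition CN (M : vec -> Prop) (f : vec -> R) : Prop :=
  convex M /\ conic rle M f.

(* t(x) = max of the constraint functions g_1..g_{m+1} (nonempty family) *)
Definition tmax (m : nat) (g : 'I_m.+1 -> vec -> R) (x : vec) : R :=
  \big[Num.max/g ord0 x]_(i < m.+1) g i x.

Definition pospart (s : R) : R := Num.max s 0.

Definition hfun (m : nat) (g : 'I_m.+1 -> vec -> R) (f : vec -> R)
    (x : vec) : R * R := (pospart (tmax g x), f x).

Definition feasible (m : nat) (g : 'I_m.+1 -> vec -> R) (D : vec -> Prop)
    (x : vec) : Prop := D x /\ forall i, g i x <= 0.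

Definition is_minimizer {T : Type} (le : T -> T -> Prop) (f : vec -> T)
    (S : vec -> Prop) (x : vec) : Prop :=
  S x /\ forall y, S y -> le (f x) (f y).
End Defs.

(** The feasibility measure [p x = (max_i g_i x)_+] is conic, because a pointwise
    maximum of conic functions is conic.  A conic function is in fact strictly
    conic along rays ([f y < f z] forces [f z < f (z + t (z - y))] for [t > 0]),
    which is exactly what makes the lexicographic pair [(p, f)] conic.  Finally
    [p >= 0] vanishes precisely on the feasible set, so once that set is nonempty
    every lexicographic minimizer of [(p, f)] has [p = 0], and among such points
    it minimizes [f]. *)
From HB Require Import structures.
From mathcomp Require Import all_boot all_order all_algebra.
Set Implicit Arguments.
Unset Strict Implicit.
Unset Printing Implicit Defensive.
Import Order.TTheory GRing.Theory Num.Theory.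
Local Open Scope ring_scope.

Section Conic.
Variables (R : realFieldType) (n : nat) (M : 'rV[R]_n -> Prop).
Implicit Types (F G p f : 'rV[R]_n -> R).

Lemma conic_ext {T : Type} (le : T -> T -> Prop) (F G : 'rV[R]_n -> T) :
  (forall x, F x = G x) -> conic le M F -> conic le M G.
Proof. by move=> FG cF y z t; rewrite -!FG; exact: cF. Qed.

Lemma conic_cst (c : R) : conic (@rle R) M (fun=> c).
Proof. by move=> *; exact: lexx. Qed.

Lemma conic_max F G : conic (@rle R) M F -> conic (@rle R) M G ->
  conic (@rle R) M (fun x => Num.max (F x) (G x)).
Proof.
move=> cF cG y z t My Mz t0; rewrite /rle ge_max => /andP[Fy Gy] Mw.
have [GFz|FGz] := leP (G z) (F z).
- by rewrite (max_l GFz) in Fy *; rewrite le_max (cF y z t).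
- by rewrite (max_r (ltW FGz)) in Gy *; rewrite le_max (cG y z t) ?orbT.
Qed.

Lemma conic_pospart F : conic (@rle R) M F ->
  conic (@rle R) M (fun x => pospart (F x)).
Proof. by move=> cF; exact: conic_max cF (conic_cst (c := 0)). Qed.

Lemma conic_bigmax (I : Type) (r : seq I) F (Fs : I -> 'rV[R]_n -> R) :
  conic (@rle R) M F -> (forall i, conic (@rle R) M (Fs i)) ->
  conic (@rle R) M (fun x => \big[Num.max/F x]_(i <- r) Fs i x).
Proof.
move=> cF cFs; elim: r => [|i r IHr].
  by apply: conic_ext cF => x; rewrite big_nil.
by apply: conic_ext (conic_max (cFs i) IHr) => x; rewrite big_cons.
Qed.

Lemma conic_strict F y z (t : R) : conic (@rle R) M F ->
  M y -> M z -> 0 < t -> F y < F z -> M (z + t *: (z - y)) ->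
  F z < F (z + t *: (z - y)).
Proof.
move=> cF My Mz t_gt0 Fyz; set w := z + t *: (z - y) => Mw.
(* Continuing the ray from [w] through [z] with ratio [t^-1] lands back on [y]. *)
have back : z + t^-1 *: (z - w) = y.
  rewrite /w opprD addrA subrr add0r scalerN scalerA mulVf ?gt_eqF // scale1r.
  by rewrite opprB addrC subrK.
rewrite ltNge; apply/negP => Fwz.
have := cF w z t^-1 Mw Mz; rewrite invr_ge0 ltW // back => /(_ isT Fwz My).
by rewrite /rle leNgt Fyz.
Qed.

Lemma conic_lex p f : conic (@rle R) M p -> conic (@rle R) M f ->
  conic (@lex_le R) M (fun x => (p x, f x)).
Proof.
move=> cp cf y z t My Mz t_ge0 [/= pyz | /= [pyz fyz]] Mw; rewrite /lex_le /=.
- move: t_ge0; rewrite le_eqVlt => /predU1P[<- | t_gt0].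
    by rewrite scale0r addr0; right.
  by left; exact: conic_strict.
- have : p z <= p (z + t *: (z - y)) by apply: cp => //; rewrite /rle pyz.
  by rewrite le_eqVlt => /predU1P[<- | ]; [right; split => //; exact: cf | left].
Qed.

End Conic.

Section LexMinimizers.
Variables (R : realFieldType) (n : nat) (D S : 'rV[R]_n -> Prop).
Variables (p f : 'rV[R]_n -> R).
Hypothesis p_ge0 : forall x, 0 <= p x.
Hypothesis S_zero_set : forall x, S x <-> D x /\ p x = 0.

Lemma is_minimizer_lex : (exists x, S x) -> forall x,
  is_minimizer (@rle R) f S x <->
  is_minimizer (@lex_le R) (fun x => (p x, f x)) D x.
Proof.
move=> [x0 /S_zero_set[Dx0 px0]] x; split.
- case=> /S_zero_set[Dx px] xmin; split=> // y Dy; rewrite /lex_le /= px.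
  move: (p_ge0 y); rewrite le_eqVlt => /predU1P[py | ]; last by left.
  by right; split=> //; apply: xmin; apply/S_zero_set.
- case=> Dx xmin.
  have px : p x = 0.
    case: (xmin x0 Dx0) => /=; rewrite px0; last by case.
    by rewrite ltNge p_ge0.
  split=> [|y /S_zero_set[Dy py]]; first exact/S_zero_set.
  by case: (xmin y Dy) => /=; rewrite px py ?ltxx // => -[].
Qed.

End LexMinimizers.

Lemma pospart_ge0 (R : realFieldType) (s : R) : 0 <= pospart s.
Proof. by rewrite le_max lexx orbT. Qed.

Lemma pospart_tmax_eq0 (R : realFieldType) (n m : nat)
    (g : 'I_m.+1 -> 'rV[R]_n -> R) x :
  pospart (tmax g x) = 0 <-> forall i, g i x <= 0.
Proof.
split=> [tx0 i | gx_le0].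
- apply: le_trans (le_bigmax (g ord0 x) (fun j => g j x) i) _.
  by rewrite -[leRHS]tx0 le_max lexx.
- by apply: max_r; apply: bigmax_le => //; exact: gx_le0.
Qed.

Theorem mainTheorem4 (R : realFieldType) (n m : nat)
    (M D : 'rV[R]_n -> Prop) (f : 'rV[R]_n -> R) (g : 'I_m.+1 -> 'rV[R]_n -> R) :
  CN M f -> (forall i, CN M (g i)) ->
  (forall x, D x -> M x) ->
  conic (@lex_le R) M (hfun g f) /\
  ((exists x, feasible g D x) ->
   forall x, is_minimizer (@rle R) f (feasible g D) x <->
             is_minimizer (@lex_le R) (hfun g f) D x).
Proof.
move=> [_ cf] cg _.
have cp : conic (@rle R) M (fun x => pospart (tmax g x)).
  exact: conic_pospart (conic_bigmax (cg ord0).2 (fun i => (cg i).2)).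
split; first exact: conic_lex.
apply: is_minimizer_lex => [x | y]; first exact: pospart_ge0.
by split=> -[Dy gy]; split=> //; apply/pospart_tmax_eq0.
Qed.
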